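(* Let $f:\mathbb{R}^n\to\mathbb{R}$ be a continuously differentiable convex function, and $s$ a positive integer. Let $h(x)=\sum_{i=1}^n h_i(x_i)$ with each $h_i:\mathbb{R}\to\mathbb{R}$ convex and continuously differentiable, and assume $h$ is supercoercive ($\lim_{\|x\|\to\infty}h(x)/\|x\|=\infty$). Assume $L_h h-f$ is convex for some $L_h>0$ and let $L>L_h$. Let $(x_k)$ be generated by the BPG algorithm with $h$ and $L$. Then every limit point $\bar x$ of $(x_k)$ is $L$-Bregman stationary, i.e. $$\bar x\in\operatorname*{argmin}_{y\in C_s}\ \nabla f(\bar x)^T(y-\bar x)+L D_h(y,\bar x).$$
   Context: $C_s=\{x\in\mathbb{R}^n:\|x\|_0\le s\}$ where $\|x\|_0$ is the number of nonzero entries. $D_h(y,x)=h(y)-h(x)-\nabla h(x)^T(y-x)$. BPG algorithm: start from $x_0\in C_s$ and for $k\ge0$ pick $x_{k+1}\in\operatorname{argmin}_{x\in C_s}\ \nabla f(x_k)^T(x-x_k)+LD_h(x,x_k)$. *)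

From HB Require Import structures.
From mathcomp Require Import all_boot all_order all_algebra.
From mathcomp Require Import all_classical all_reals all_analysis.
Set Implicit Arguments. Unset Strict Implicit. Unset Printing Implicit Defensive.
Import Order.TTheory GRing.Theory Num.Theory.
Import numFieldNormedType.Exports.
Local Open Scope ring_scope.
Local Open Scope classical_set_scope.

Section Defs.
Context {R : realType} {n : nat}.
Local Notation V := 'rV[R]_n.

Definition Pconvex_fun (f : V -> R) : Prop :=
  forall (x y : V) (t : R), 0 <= t -> t <= 1 ->
    f (t *: x + (1 - t) *: y) <= t * f x + (1 - t) * f y.

Definition Pconvex_fun1 (g : R -> R) : Prop :=
  forall (x y t : R), 0 <= t -> t <= 1 ->
    g (t * x + (1 - t) * y) <= t * g x + (1 - t) * g y.

(* continuously differentiable on R^n: differentiable everywhere and every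
   directional derivative x |-> Df(x) v (i.e. each partial derivative) is continuous *)
Definition PC1 (f : V -> R) : Prop :=
  (forall x : V, differentiable f x) /\
  (forall v : V, continuous (fun x : V => ('d f x : V -> R) v)).

Definition PC1_1 (g : R -> R) : Prop :=
  (forall x : R, derivable g x 1) /\ continuous (g^`()).

Definition Pl0norm (x : V) : nat := #|[set i : 'I_n | x ord0 i != 0%R]|.

Definition PCs (s : nat) : set V := [set x | (Pl0norm x <= s)%N].

(* gradient pairing  grad f(x)^T v  :=  Df(x) v *)
Definition PgradT (f : V -> R) (x v : V) : R := ('d f x : V -> R) v.

Definition PDh (h : V -> R) (y x : V) : R := h y - h x - PgradT h x (y - x).

Definition Pis_argmin (C : set V) (phi : V -> R) (z : V) : Prop :=
  C z /\ forall y, C y -> phi z <= phi y.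

Definition bpg_obj (f h : V -> R) (L : R) (xk : V) (y : V) : R :=
  PgradT f xk (y - xk) + L * PDh h y xk.

Definition bpg_seq (f h : V -> R) (L : R) (s : nat) (x : nat -> V) : Prop :=
  PCs s (x 0%N) /\ forall k, Pis_argmin (PCs s) (bpg_obj f h L (x k)) (x k.+1).

Definition Psupercoercive (h : V -> R) : Prop :=
  forall M : R, exists r : R, forall x : V, r < `|x| -> M < h x / `|x|.

Definition Plimit_point (x : nat -> V) (xbar : V) : Prop :=
  exists phi : nat -> nat, (forall k, (phi k < phi k.+1)%N) /\
    (x \o phi) @ \oo --> xbar.

End Defs.

From HB Require Import structures.
From mathcomp Require Import all_boot all_order all_algebra.
From mathcomp Require Import all_classical all_reals all_analysis.
From mathcomp Require Import ring lra.
Import Order.TTheory GRing.Theory Num.Theory.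
Import numFieldNormedType.Exports.
Local Open Scope ring_scope.
Local Open Scope classical_set_scope.

(* Convexity of Lh h - f gives the descent inequality
     f y <= f x + <grad f x, y - x> + Lh D_h(y, x),
   and D_h >= 0 by convexity of h.  Since x_{k+1} minimises the BPG objective
   over C_s and L >= Lh, this yields f x_{k+1} - f x_k <= obj_{x_k}(y) for
   every y in C_s; taking y = x_k shows that f x_k is nonincreasing, so
   f xbar <= f x_k for all k.  Along a subsequence x_{phi k} --> xbar the
   lower bound f xbar - f x_{phi k} tends to 0 while obj_{x_{phi k}}(y) tends
   to obj_xbar(y) (f and h are C^1), hence obj_xbar(y) >= 0 = obj_xbar(xbar);
   finally xbar lies in C_s because C_s is closed. *)

Section DiffSum.
Context {R : numFieldType} {U W : normedModType R} {I : Type}.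
Variables (F : I -> U -> W) (x : U).
Hypothesis dF : forall i, differentiable (F i) x.

Lemma differentiable_sum (r : seq I) :
  differentiable (fun y => \sum_(i <- r) F i y) x.
Proof.
elim: r => [|i r IH]; first by under eq_fun do rewrite big_nil; exact: differentiable_cst.
by under eq_fun do rewrite big_cons; exact: differentiableD.
Qed.

Lemma diff_sum (r : seq I) (v : U) :
  'd (fun y => \sum_(i <- r) F i y) x v = \sum_(i <- r) 'd (F i) x v.
Proof.
elim: r => [|i r IH]; first by under eq_fun do rewrite big_nil; rewrite big_nil diff_cst.
under eq_fun do rewrite big_cons.
have -> : (fun y => F i y + \sum_(j <- r) F j y) = F i + (fun y => \sum_(j <- r) F j y) by [].
rewrite diffD //; last exact: differentiable_sum.
by rewrite big_cons [LHS]/= IH.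
Qed.
End DiffSum.

Definition rV_coord {R : numFieldType} {n : nat} (i : 'I_n) (y : 'rV[R]_n) : R :=
  y ord0 i.

Lemma rV_coord_is_linear {R : numFieldType} {n : nat} (i : 'I_n) :
  linear (@rV_coord R n i).
Proof. by move=> a y z; rewrite /rV_coord !mxE. Qed.

HB.instance Definition _ {R : numFieldType} {n : nat} (i : 'I_n) :=
  GRing.isLinear.Build R 'rV[R]_n R *:%R (@rV_coord R n i) (rV_coord_is_linear i).

Lemma continuous_sum_mul {R : numFieldType} {T : topologicalType} {I : Type}
    (r : seq I) (F G : I -> T -> R) :
  (forall i, continuous (F i)) -> (forall i, continuous (G i)) ->
  continuous (fun z => \sum_(i <- r) F i z * G i z).
Proof.
move=> cF cG z; apply: (@cvg_big _ _ +%R 0 xpredT add_continuous) => // i _.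
exact: cvgM (cF i z) (cG i z).
Qed.

Section ConvexGradient.
Context {R : realType} {n : nat}.
Local Notation V := 'rV[R]_n.

Lemma convex_gradT_le (g : V -> R) (x y : V) :
  Pconvex_fun g -> differentiable g x -> PgradT g x (y - x) <= g y - g x.
Proof.
move=> gconv dg; set v := y - x.
have quot_cvg : (fun t : R => t^-1 *: ((g \o shift x) (t *: v) - g x))
    @ (0 : R)^'+ --> PgradT g x v.
  by apply: cvg_dnbhs_at_right; rewrite /PgradT -deriveE //; exact: diff_derivable.
apply: (ler_cvg_to quot_cvg (cvg_cst (g y - g x))).
near=> t.
have t_gt0 : 0 < t by near: t; exact: nbhs_right_gt.
have t_le1 : t <= 1 by near: t; apply: nbhs_right_le; exact: ltr01.
have := gconv y x t (ltW t_gt0) t_le1.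
have -> : t *: y + (1 - t) *: x = t *: v + x.
  by rewrite /v scalerBr scalerBl scale1r addrA addrAC.
rewrite /= /shift -[t^-1 *: _]/(t^-1 * _) ler_pdivrMl //; lra.
Unshelve. all: by end_near.
Qed.

Lemma PDh_ge0 (h : V -> R) (x y : V) :
  Pconvex_fun h -> differentiable h x -> 0 <= PDh h y x.
Proof. by move=> hconv dh; rewrite /PDh subr_ge0 convex_gradT_le. Qed.

Lemma PgradT_affine (f h : V -> R) (c : R) (x v : V) :
  differentiable f x -> differentiable h x ->
  differentiable (fun y => c * h y - f y) x /\
  PgradT (fun y => c * h y - f y) x v = c * PgradT h x v - PgradT f x v.
Proof.
move=> df dh; have -> : (fun y => c * h y - f y) = c *: h - f by [].
have dch : differentiable (c *: h) x by exact: differentiableZ.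
split; first exact: differentiableB.
by rewrite /PgradT (diffB dch df) (diffZ _ dh) [LHS]/=.
Qed.

Lemma descent_lemma (f h : V -> R) (Lh : R) (x y : V) :
  differentiable f x -> differentiable h x ->
  Pconvex_fun (fun y => Lh * h y - f y) ->
  f y <= f x + PgradT f x (y - x) + Lh * PDh h y x.
Proof.
move=> df dh gconv; have [dg dgE] := PgradT_affine _ _ Lh _ (y - x) df dh.
have := convex_gradT_le _ _ y gconv dg; rewrite dgE /PDh /=.
move: (PgradT h x _) (PgradT f x _) => dh_yx df_yx gap_ge.
have -> : f x + df_yx + Lh * (h y - h x - dh_yx) =
    f y + (Lh * h y - f y - (Lh * h x - f x) - (Lh * dh_yx - df_yx)) by ring.
by rewrite lerDl subr_ge0.
Qed.

Lemma bpg_obj_id (f h : V -> R) (L : R) (x : V) : bpg_obj f h L x x = 0.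
Proof. by rewrite /bpg_obj /PDh /PgradT subrr !linear0 subrr !add0r mulr0. Qed.

End ConvexGradient.

Section SparsitySet.
Context {R : realType} {n : nat}.
Local Notation V := 'rV[R]_n.

Lemma Pl0norm_near_ge (x : V) : \forall y \near x, (Pl0norm x <= Pl0norm y)%N.
Proof.
have supp_near i : \forall y \near x, x ord0 i != 0 -> (y : V) ord0 i != 0.
  have [xi0|xi0] := eqVneq (x ord0 i) 0.
    exact: filterE.
  near=> y => _; near: y.
  exact: cvgr_neq0 _ (@coord_continuous R 1 n ord0 i x) xi0.
near=> y.
have supp_y : forall i, x ord0 i != 0 -> y ord0 i != 0.
  by near: y; exact: filter_forall supp_near.
apply: subset_leq_card; apply/fintype.subsetP => i; rewrite !inE; exact: supp_y.
Unshelve. all: by end_near.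
Qed.

Lemma closed_PCs (s : nat) : closed (@PCs R n s).
Proof.
move=> x /(_ _ (Pl0norm_near_ge x)) [y [Cy le_xy]].
exact: leq_trans le_xy Cy.
Qed.

End SparsitySet.

Section SeparableKernel.
Context {R : realType} {n : nat}.
Local Notation V := 'rV[R]_n.
Context {hi : 'I_n -> R -> R} {h : V -> R}.
Hypothesis hE : forall y : V, h y = \sum_(i < n) hi i (y ord0 i).

Lemma separable_convex : (forall i, Pconvex_fun1 (hi i)) -> Pconvex_fun h.
Proof.
move=> hi_convex y z t t0 t1; rewrite !hE !mulr_sumr -big_split /=.
by apply: ler_sum => i _; rewrite !mxE; exact: hi_convex.
Qed.

Hypothesis hi_C1 : forall i, PC1_1 (hi i).

Let hE_coord : h = fun y => \sum_(i < n) (hi i \o rV_coord i) y.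
Proof. exact/funext/hE. Qed.

Let differentiable_hi i (t : R) : differentiable (hi i) t.
Proof. by apply/derivable1_diffP; case: (hi_C1 i). Qed.

Let differentiable_coord i (x : V) : differentiable (rV_coord i) x.
Proof. exact/linear_differentiable/coord_continuous. Qed.

Let differentiable_hi_coord i (x : V) : differentiable (hi i \o rV_coord i) x.
Proof. exact: differentiable_comp (differentiable_coord i x) (differentiable_hi i _). Qed.

Lemma differentiable_separable (x : V) : differentiable h x.
Proof. by rewrite hE_coord; apply: differentiable_sum => i; exact: differentiable_hi_coord. Qed.

Lemma PgradT_separable (x v : V) :
  PgradT h x v = \sum_(i < n) v ord0 i * derive1 (hi i) (x ord0 i).
Proof.
rewrite /PgradT hE_coord diff_sum => [|i]; last exact: differentiable_hi_coord.
apply: eq_bigr => i _.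
rewrite (diff_comp (differentiable_coord i x) (differentiable_hi i _)) /=.
by rewrite diff_lin ?diff1E //; exact: coord_continuous.
Qed.

Lemma PC1_separable : PC1 h.
Proof.
split=> [|v]; first exact: differentiable_separable.
have -> : (fun x => ('d h x : V -> R) v) =
    fun x => \sum_(i < n) v ord0 i * derive1 (hi i) (x ord0 i).
  by apply/funext => x; exact: PgradT_separable.
apply: (@continuous_sum_mul _ _ _ _ (fun i _ => v ord0 i)
                                  (fun i => derive1 (hi i) \o rV_coord i)) => i.
  exact: cst_continuous.
move=> x; apply: continuous_comp; first exact: coord_continuous.
by case: (hi_C1 i) => _; apply.
Qed.

End SeparableKernel.

Section ObjectiveContinuity.
Context {R : realType} {n : nat}.
Local Notation V := 'rV[R]_n.

Lemma PgradT_coordE (g : V -> R) (x v : V) :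
  PgradT g x v = \sum_j v ord0 j * PgradT g x (delta_mx 0 j).
Proof.
rewrite /PgradT {1}(row_sum_delta v) linear_sum; apply: eq_bigr => j _.
by rewrite linearZ.
Qed.

Lemma continuous_PgradT_sub (g : V -> R) (y : V) :
  PC1 g -> continuous (fun z => PgradT g z (y - z)).
Proof.
move=> [_ dg_cont].
have -> : (fun z => PgradT g z (y - z)) =
    fun z => \sum_j (y ord0 j - z ord0 j) * PgradT g z (delta_mx 0 j).
  by apply/funext => z; rewrite PgradT_coordE; apply: eq_bigr => j _; rewrite !mxE.
apply: (@continuous_sum_mul _ _ _ _ (fun j (z : V) => y ord0 j - z ord0 j)
                                  (fun j z => PgradT g z (delta_mx 0 j))) => j.
  by move=> z; apply: continuousB; [exact: cst_continuous | exact: coord_continuous].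
exact: dg_cont.
Qed.

Lemma continuous_bpg_obj (f h : V -> R) (L : R) (y : V) :
  PC1 f -> PC1 h -> continuous (fun z => bpg_obj f h L z y).
Proof.
move=> f_C1 h_C1 z.
(* [apply: cvgD] unfolds the neighbourhood filter of matrices, so its
   [Filter] instance has to be provided as a hypothesis. *)
have zF : Filter (nbhs z) by exact: nbhs_filter.
apply: cvgD; first exact: continuous_PgradT_sub.
apply: cvgM; first exact: cvg_cst.
apply: cvgB; last exact: continuous_PgradT_sub.
by apply: cvgB; [exact: cvg_cst | exact/differentiable_continuous/h_C1.1].
Qed.

End ObjectiveContinuity.

Lemma nonincreasing_subseq_cvg_le {R : realType} {u : nat -> R}
    {phi : nat -> nat} {l : R} :
  nonincreasing_seq u -> (forall k, phi k < phi k.+1)%N ->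
  (u \o phi) @ \oo --> l -> forall j, l <= u j.
Proof.
move=> u_noninc phi_incr u_phi_cvg j.
have phi_ge k : (k <= phi k)%N.
  by elim: k => // k IH; exact: leq_ltn_trans IH (phi_incr k).
apply: (ler_cvg_to u_phi_cvg (cvg_cst (u j))).
by exists j => // k /= jk; apply: u_noninc; exact: leq_trans jk (phi_ge k).
Qed.

Section BPGIterates.
Context {R : realType} {n : nat}.
Local Notation V := 'rV[R]_n.
Context {f h : V -> R} {Lh L : R} {s : nat} {x : nat -> V}.
Hypotheses (f_C1 : PC1 f) (h_C1 : PC1 h) (h_convex : Pconvex_fun h).
Hypotheses (Lh_h_sub_f_convex : Pconvex_fun (fun y => Lh * h y - f y)) (Lh_le_L : Lh <= L).
Hypothesis x_bpg : bpg_seq f h L s x.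

Lemma bpg_seq_Cs k : PCs s (x k).
Proof. by case: k => [|k]; [exact: x_bpg.1 | exact: (x_bpg.2 k).1]. Qed.

Lemma bpg_value_decrease_le k y :
  PCs s y -> f (x k.+1) - f (x k) <= bpg_obj f h L (x k) y.
Proof.
move=> Cy; have := (x_bpg.2 k).2 y Cy.
have := descent_lemma _ _ _ _ (x k.+1) (f_C1.1 (x k)) (h_C1.1 _) Lh_h_sub_f_convex.
have : 0 <= (L - Lh) * PDh h (x k.+1) (x k).
  by apply: mulr_ge0; [rewrite subr_ge0 | exact: PDh_ge0 _ _ _ h_convex (h_C1.1 _)].
rewrite /bpg_obj; lra.
Qed.

Lemma bpg_nonincreasing : nonincreasing_seq (f \o x).
Proof.
apply/nonincreasing_seqP => k /=.
by have := bpg_value_decrease_le k (x k) (bpg_seq_Cs k); rewrite bpg_obj_id subr_le0.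
Qed.

Lemma bpg_limit_point_stationary (xbar : V) :
  Plimit_point x xbar -> Pis_argmin (PCs s) (bpg_obj f h L xbar) xbar.
Proof.
move=> [phi [phi_incr x_phi_cvg]].
have f_cont : continuous f by move=> z; exact/differentiable_continuous/f_C1.1.
have f_phi_cvg := cvg_comp _ _ x_phi_cvg (f_cont xbar).
have f_xbar_le := nonincreasing_subseq_cvg_le bpg_nonincreasing phi_incr f_phi_cvg.
split=> [|y Cy].
  apply: (closed_cvg _ (closed_PCs s) _ _ x_phi_cvg).
  by apply: nearW => k; exact: bpg_seq_Cs.
rewrite bpg_obj_id.
have gap_cvg : (fun k => f xbar - f (x (phi k))) @ \oo --> 0.
  by rewrite -(subrr (f xbar)); apply: cvgB; [exact: cvg_cst | exact: f_phi_cvg].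
have obj_cvg := cvg_comp _ _ x_phi_cvg (continuous_bpg_obj f h L y f_C1 h_C1 xbar).
apply: (ler_cvg_to gap_cvg obj_cvg); apply: nearW => k /=.
have /= := f_xbar_le (phi k).+1; have := bpg_value_decrease_le (phi k) y Cy; lra.
Qed.

End BPGIterates.

Theorem theoremA3 (R : realType) (n s : nat) (f : 'rV[R]_n -> R)
  (hi : 'I_n -> R -> R) (h : 'rV[R]_n -> R) (Lh L : R) (x : nat -> 'rV[R]_n) :
  PC1 f -> Pconvex_fun f -> (0 < s)%N ->
  (forall i, Pconvex_fun1 (hi i)) -> (forall i, PC1_1 (hi i)) ->
  (forall y : 'rV[R]_n, h y = \sum_(i < n) hi i (y ord0 i)) ->
  Psupercoercive h ->
  0 < Lh -> Pconvex_fun (fun y => Lh * h y - f y) -> Lh < L ->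
  bpg_seq f h L s x ->
  forall xbar : 'rV[R]_n, Plimit_point x xbar ->
    Pis_argmin (PCs s) (bpg_obj f h L xbar) xbar.
Proof.
move=> f_C1 _ _ hi_convex hi_C1 hE _ _ Lh_h_sub_f_convex Lh_lt_L x_bpg.
exact: bpg_limit_point_stationary f_C1 (PC1_separable hE hi_C1)
  (separable_convex hE hi_convex) Lh_h_sub_f_convex (ltW Lh_lt_L) x_bpg.
Qed.
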